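(* Let $|\psi\rangle$ be a normalized pure three-qubit state such that the reduced density matrix of one of its qubits is maximally mixed (equal to $\frac12 I$). Then $G(|\psi\rangle)^2=\frac12$. In particular $G(|\mathrm{GHZ}\rangle)^2=\frac12$ for $|\mathrm{GHZ}\rangle=\frac{1}{\sqrt2}(|000\rangle+|111\rangle)$.
   Context: For a normalized pure three-qubit state, $G(|\psi\rangle):=\max|\langle a|\langle b|\langle c|\psi\rangle|$ over all normalized single-qubit states $|a\rangle,|b\rangle,|c\rangle$. *)

(* Complex scalars: an arbitrary numClosedFieldType C
   (algebraically closed field with conjugation and norm, e.g. the complex numbers). *)
From HB Require Import structures.
From mathcomp Require Import all_boot all_order all_algebra.
Set Implicit Arguments. Unset Strict Implicit. Unset Printing Implicit Defensive.
Import Order.TTheory GRing.Theory Num.Theory.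
Local Open Scope ring_scope.

Definition qubit (C : numClosedFieldType) := 'I_2 -> C.
Definition qubit3 (C : numClosedFieldType) := 'I_2 -> 'I_2 -> 'I_2 -> C.

Definition normalized1 (C : numClosedFieldType) (a : qubit C) : Prop :=
  \sum_(i < 2) `|a i| ^+ 2 = 1.

Definition normalized3 (C : numClosedFieldType) (psi : qubit3 C) : Prop :=
  \sum_(i < 2) \sum_(j < 2) \sum_(k < 2) `|psi i j k| ^+ 2 = 1.

Definition overlap (C : numClosedFieldType) (a b c : qubit C) (psi : qubit3 C) : C :=
  \sum_(i < 2) \sum_(j < 2) \sum_(k < 2)
     (a i)^* * (b j)^* * (c k)^* * psi i j k.

(* Reduced density matrices of qubits 1, 2, 3 (partial traces of |psi><psi|). *)
Definition rho1 (C : numClosedFieldType) (psi : qubit3 C) : 'M[C]_2 :=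
  \matrix_(i, i') \sum_(j < 2) \sum_(k < 2) psi i j k * (psi i' j k)^*.
Definition rho2 (C : numClosedFieldType) (psi : qubit3 C) : 'M[C]_2 :=
  \matrix_(j, j') \sum_(i < 2) \sum_(k < 2) psi i j k * (psi i j' k)^*.
Definition rho3 (C : numClosedFieldType) (psi : qubit3 C) : 'M[C]_2 :=
  \matrix_(k, k') \sum_(i < 2) \sum_(j < 2) psi i j k * (psi i j k')^*.

Definition maximally_mixed (C : numClosedFieldType) (rho : 'M[C]_2) : Prop :=
  rho = (2%:R)^-1 *: (1%:M).

Definition is_G (C : numClosedFieldType) (psi : qubit3 C) (g : C) : Prop :=
  (exists a b c : qubit C, [/\ normalized1 a, normalized1 b, normalized1 c
                             & `|overlap a b c psi| = g]) /\
  (forall a b c : qubit C, normalized1 a -> normalized1 b -> normalized1 c ->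
                           `|overlap a b c psi| <= g).

Definition ghz (C : numClosedFieldType) : qubit3 C :=
  fun i j k =>
    if ((val i == 0%N) && (val j == 0%N) && (val k == 0%N)) ||
       ((val i == 1%N) && (val j == 1%N) && (val k == 1%N))
    then (sqrtC (2%:R))^-1 else 0.

(* Write the overlap <a|<b|<c|psi> as <b|<c|M> where M = slice a psi is the
   2x2 array obtained by contracting qubit 1 with <a|.
   - Upper bound: by Cauchy-Schwarz (applied twice) |<b|<c|M>|^2 is at most
     the squared Frobenius norm of M, and that norm equals <a|rho1^T|a>, which
     is 1/2 for every unit vector a when rho1 = I/2.
   - Attainment: det (slice a psi) is a binary quadratic form in conj(a), so
     over an algebraically closed field some unit vector a makes the slice
     singular; a singular 2x2 array has rank one, and choosing c along one of
     its nonzero rows and b along M c achieves equality in both bounds.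
   The cases of qubits 2 and 3 reduce to qubit 1 by relabelling the qubits. *)

From HB Require Import structures.
From mathcomp Require Import all_boot all_order all_algebra.
From mathcomp Require Import ring.
Set Implicit Arguments. Unset Strict Implicit. Unset Printing Implicit Defensive.
Import Order.TTheory GRing.Theory Num.Theory.
Local Open Scope ring_scope.

(* Complex conjugation as rewrite rules stated with the conjugation notation,
   so that they fire on the syntactic forms produced by unfolding sums. *)
Section Conjugation.
Variable C : numClosedFieldType.
Implicit Types x y : C.

Lemma conjCD x y : (x + y)^* = x^* + y^*. Proof. exact: rmorphD. Qed.
Lemma conjCM x y : (x * y)^* = x^* * y^*. Proof. exact: rmorphM. Qed.
Lemma conjCN x : (- x)^* = - x^*. Proof. exact: rmorphN. Qed.

End Conjugation.

Section Vectors.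
Variables (C : numClosedFieldType) (I : finType).
Implicit Types u v : I -> C.

Definition inner u v : C := \sum_i (u i)^* * v i.
Definition sqnorm u : C := \sum_i `|u i| ^+ 2.
Definition normalize u : I -> C := fun i => u i / sqrtC (sqnorm u).

Lemma sqnorm_ge0 u : 0 <= sqnorm u.
Proof. by apply: sumr_ge0 => i _; rewrite exprn_ge0. Qed.

Lemma inner_self u : inner u u = sqnorm u.
Proof. by apply: eq_bigr => i _; rewrite normCK mulrC. Qed.

(* Cauchy–Schwarz against a unit vector: expand 0 <= ||v - <u|v> u||^2. *)
Lemma cauchy_schwarz_unit u v : sqnorm u = 1 -> `|inner u v| ^+ 2 <= sqnorm v.
Proof.
move=> nu; set s := inner u v.
have expand i : `|v i - s * u i| ^+ 2 =
    `|v i| ^+ 2 - s^* * ((u i)^* * v i) - s * ((u i)^* * v i)^* + s * s^* * `|u i| ^+ 2.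
  by rewrite !normCK !(conjCD, conjCN, conjCM, conjCK); ring.
have : 0 <= sqnorm (fun i => v i - s * u i) by apply: sqnorm_ge0.
rewrite /sqnorm (eq_bigr _ (fun i _ => expand i)) big_split !sumrB /=.
rewrite -!mulr_sumr -rmorph_sum -/(inner u v) -/s -/(sqnorm v) -/(sqnorm u) nu.
by rewrite normCK mulr1 subrK mulrC subr_ge0.
Qed.

Lemma sqrt_sqnorm_ge0 u : 0 <= sqrtC (sqnorm u).
Proof. by rewrite sqrtC_ge0 sqnorm_ge0. Qed.

Lemma sqrt_sqnormE u : `|sqrtC (sqnorm u)| ^+ 2 = sqnorm u.
Proof. by rewrite ger0_norm ?sqrt_sqnorm_ge0 // sqrtCK. Qed.

Lemma sqnorm_normalize u : sqnorm u != 0 -> sqnorm (normalize u) = 1.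
Proof.
move=> nz; rewrite /sqnorm /normalize.
under eq_bigr => i _ do rewrite normrM normfV exprMn exprVn sqrt_sqnormE.
by rewrite -mulr_suml divff.
Qed.

Lemma inner_normalize u v : inner (normalize u) v = (sqrtC (sqnorm u))^-1 * inner u v.
Proof.
rewrite /inner mulr_sumr; apply: eq_bigr => i _.
have real_inv : (sqrtC (sqnorm u))^-1^* = (sqrtC (sqnorm u))^-1.
  by rewrite geC0_conj // invr_ge0 sqrt_sqnorm_ge0.
by rewrite conjCM real_inv mulrCA mulrA.
Qed.

Lemma inner_normalize_self u :
  sqnorm u != 0 -> inner (normalize u) u = sqrtC (sqnorm u).
Proof.
move=> nz; rewrite inner_normalize inner_self -{2}[sqnorm u]sqrtCK.
by rewrite expr2 mulKf // sqrtC_eq0.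
Qed.

End Vectors.

Lemma sum_ord2 (V : zmodType) (F : 'I_2 -> V) : \sum_(i < 2) F i = F 0 + F 1.
Proof. rewrite big_ord_recl big_ord1; congr (_ + F _); exact: val_inj. Qed.

Lemma ord2_cases (i : 'I_2) : i = 0 \/ i = 1.
Proof. by case: i => -[|[|//]] ?; [left|right]; apply: val_inj. Qed.

Section TwoQubits.
Variable C : numClosedFieldType.
Implicit Types (b c x : qubit C) (M : 'I_2 -> qubit C).

Definition qvec (u0 u1 : C) : qubit C := fun i => if i == 0 then u0 else u1.

Lemma qvec0 (u0 u1 : C) : qvec u0 u1 0 = u0. Proof. by []. Qed.
Lemma qvec1 (u0 u1 : C) : qvec u0 u1 1 = u1. Proof. by []. Qed.

Lemma sqnorm_qvec (u0 u1 : C) : sqnorm (qvec u0 u1) = `|u0| ^+ 2 + `|u1| ^+ 2.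
Proof. by rewrite /sqnorm sum_ord2. Qed.

Lemma sqnorm_e0 : sqnorm (qvec 1 0) = 1.
Proof. by rewrite sqnorm_qvec normr1 normr0 expr1n expr0n addr0. Qed.

Definition det2 M : C := M 0 0 * M 1 1 - M 0 1 * M 1 0.
Definition frob M : C := \sum_j sqnorm (M j).
Definition pairing b c M : C := inner b (fun j => inner c (M j)).

Lemma pairing_le b c M :
  sqnorm b = 1 -> sqnorm c = 1 -> `|pairing b c M| ^+ 2 <= frob M.
Proof.
move=> nb nc; apply: le_trans (cauchy_schwarz_unit _ nb) _.
by apply: ler_sum => j _; apply: cauchy_schwarz_unit.
Qed.

(* Lagrange's identity |<x|y>|^2 = |x|^2 |y|^2 - |x ^ y|^2, summed over rows y. *)
Lemma gram_identity M r :
  sqnorm (fun j => inner (M r) (M j)) = sqnorm (M r) * frob M - `|det2 M| ^+ 2.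
Proof.
rewrite /frob /det2 /sqnorm /inner !sum_ord2 !normCK.
by case: (ord2_cases r) => ->; rewrite !(conjCD, conjCN, conjCM, conjCK); ring.
Qed.

(* A singular 2x2 array has rank at most one, so some product vector
   attains the Frobenius norm: take c along a nonzero row, b along M c. *)
Lemma pairing_attains M : det2 M = 0 ->
  exists b c, [/\ sqnorm b = 1, sqnorm c = 1 & `|pairing b c M| ^+ 2 = frob M].
Proof.
move=> singular.
have [frob0 | frob_nz] := eqVneq (frob M) 0.
  exists (qvec 1 0), (qvec 1 0); split; rewrite ?sqnorm_e0 // frob0.
  apply/eqP; rewrite eq_le exprn_ge0 ?andbT //.
  by have := pairing_le M sqnorm_e0 sqnorm_e0; rewrite frob0.
have [r row_nz] : exists r, sqnorm (M r) != 0.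
  have [row0 | ] := eqVneq (sqnorm (M 0)) 0; last by exists 0.
  by exists 1; rewrite /frob sum_ord2 row0 add0r in frob_nz.
pose c := normalize (M r); pose w j := inner c (M j).
have sqnorm_w : sqnorm w = frob M.
  have -> : sqnorm w = `|(sqrtC (sqnorm (M r)))^-1| ^+ 2 *
                       sqnorm (fun j => inner (M r) (M j)).
    rewrite /sqnorm mulr_sumr; apply: eq_bigr => j _.
    by rewrite /w inner_normalize normrM exprMn.
  rewrite gram_identity singular normr0 expr0n subr0 normfV exprVn sqrt_sqnormE.
  by rewrite mulKf.
have w_nz : sqnorm w != 0 by rewrite sqnorm_w.
exists (normalize w), c; split; [exact: sqnorm_normalize | exact: sqnorm_normalize |].
by rewrite /pairing -/w inner_normalize_self // sqrt_sqnormE.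
Qed.

Lemma binary_quadratic_isotropic (A B D : C) :
  exists x, sqnorm x != 0 /\ A * x 0 ^+ 2 + B * x 0 * x 1 + D * x 1 ^+ 2 = 0.
Proof.
have [-> | A_nz] := eqVneq A 0.
  exists (qvec 1 0); split; last by rewrite qvec0 qvec1; ring.
  by rewrite sqnorm_e0 oner_eq0.
set r := sqrtC (B ^+ 2 - 4%:R * A * D).
exists (qvec (r - B) (2%:R * A)); split.
  rewrite sqnorm_qvec paddr_eq0 ?exprn_ge0 // negb_and !expf_eq0 /= !normr_eq0.
  by rewrite mulf_neq0 ?pnatr_eq0 ?orbT.
transitivity (A * (r ^+ 2 - (B ^+ 2 - 4%:R * A * D))); first by rewrite qvec0 qvec1; ring.
by rewrite sqrtCK subrr mulr0.
Qed.

End TwoQubits.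

Section ThreeQubits.
Variable C : numClosedFieldType.
Implicit Types (a b c : qubit C) (psi : qubit3 C).

Definition slice a psi : 'I_2 -> qubit C := fun j k => inner a (fun i => psi i j k).

Lemma overlap_slice a b c psi : overlap a b c psi = pairing b c (slice a psi).
Proof. by rewrite /overlap /pairing /slice /inner !sum_ord2; ring. Qed.

Lemma frob_slice a psi :
  frob (slice a psi) = \sum_i \sum_i' (a i)^* * a i' * rho1 psi i i'.
Proof.
rewrite /frob /sqnorm /slice /inner !sum_ord2 !mxE !sum_ord2 !normCK.
by rewrite !(conjCD, conjCM, conjCK); ring.
Qed.

Lemma frob_slice_mixed a psi : maximally_mixed (rho1 psi) ->
  frob (slice a psi) = 2%:R^-1 * sqnorm a.
Proof.
move=> mixed; rewrite frob_slice mixed /sqnorm !sum_ord2 !mxE !normCK /=.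
by ring.
Qed.

(* Some unit vector a makes the slice singular: det2 (slice a psi) is a
   binary quadratic form in the conjugate coordinates of a. *)
Lemma exists_singular_slice psi :
  exists a, sqnorm a = 1 /\ det2 (slice a psi) = 0.
Proof.
have [x [x_nz isotropic]] := binary_quadratic_isotropic
  (psi 0 0 0 * psi 0 1 1 - psi 0 0 1 * psi 0 1 0)
  (psi 0 0 0 * psi 1 1 1 + psi 1 0 0 * psi 0 1 1
    - psi 0 0 1 * psi 1 1 0 - psi 1 0 1 * psi 0 1 0)
  (psi 1 0 0 * psi 1 1 1 - psi 1 0 1 * psi 1 1 0).
pose y := fun i => (x i)^*.
have y_nz : sqnorm y != 0.
  by rewrite /sqnorm (eq_bigr _ (fun i _ => congr1 (fun t => t ^+ 2) (norm_conjC (x i)))).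
exists (normalize y); split; first exact: sqnorm_normalize.
rewrite /det2 /slice !inner_normalize /inner !sum_ord2 /y !conjCK.
set s := (sqrtC (sqnorm y))^-1.
transitivity (s ^+ 2 * (
  (psi 0 0 0 * psi 0 1 1 - psi 0 0 1 * psi 0 1 0) * x 0 ^+ 2 +
  (psi 0 0 0 * psi 1 1 1 + psi 1 0 0 * psi 0 1 1
    - psi 0 0 1 * psi 1 1 0 - psi 1 0 1 * psi 0 1 0) * x 0 * x 1 +
  (psi 1 0 0 * psi 1 1 1 - psi 1 0 1 * psi 1 1 0) * x 1 ^+ 2)); first ring.
by rewrite isotropic mulr0.
Qed.

Lemma is_G_sqrtC psi (h : C) :
  (forall a b c, normalized1 a -> normalized1 b -> normalized1 c ->
     `|overlap a b c psi| ^+ 2 <= h) ->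
  (exists a b c, [/\ normalized1 a, normalized1 b, normalized1 c
                   & `|overlap a b c psi| ^+ 2 = h]) ->
  is_G psi (sqrtC h).
Proof.
move=> bound [a [b [c [na nb nc attained]]]].
have h_ge0 : 0 <= h by rewrite -attained exprn_ge0.
split; first by exists a, b, c; split; rewrite // -attained sqrCK.
move=> a' b' c' na' nb' nc'.
rewrite -(sqrCK (normr_ge0 _)) ler_sqrtC ?nnegrE ?exprn_ge0 //.
exact: bound.
Qed.

Lemma is_G_maximally_mixed1 psi :
  maximally_mixed (rho1 psi) -> is_G psi (sqrtC 2%:R^-1).
Proof.
move=> mixed; apply: is_G_sqrtC.
  move=> a b c na nb nc; rewrite overlap_slice.
  apply: le_trans (pairing_le _ nb nc) _.
  by rewrite frob_slice_mixed // (na : sqnorm a = 1) mulr1.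
have [a [na singular]] := exists_singular_slice psi.
have [b [c [nb nc attained]]] := pairing_attains singular.
exists a, b, c; split => //.
by rewrite overlap_slice attained frob_slice_mixed // (na : sqnorm a = 1) mulr1.
Qed.

(* Relabelling the qubits permutes the arguments of the overlap, so G is invariant. *)
Definition swap12 psi : qubit3 C := fun i j k => psi j i k.
Definition rotate psi : qubit3 C := fun i j k => psi j k i.

Lemma rho1_swap12 psi : rho1 (swap12 psi) = rho2 psi. Proof. by []. Qed.
Lemma rho1_rotate psi : rho1 (rotate psi) = rho3 psi. Proof. by []. Qed.

Lemma overlap_swap12 a b c psi : overlap a b c (swap12 psi) = overlap b a c psi.
Proof. by rewrite /overlap /swap12 !sum_ord2; ring. Qed.

Lemma overlap_rotate a b c psi : overlap a b c (rotate psi) = overlap b c a psi.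
Proof. by rewrite /overlap /rotate !sum_ord2; ring. Qed.

Lemma is_G_swap12 psi g : is_G (swap12 psi) g -> is_G psi g.
Proof.
case=> [[a [b [c [na nb nc attained]]]] bound]; split.
  by exists b, a, c; split; rewrite // -overlap_swap12.
by move=> a' b' c' na' nb' nc'; rewrite -overlap_swap12; apply: bound.
Qed.

Lemma is_G_rotate psi g : is_G (rotate psi) g -> is_G psi g.
Proof.
case=> [[a [b [c [na nb nc attained]]]] bound]; split.
  by exists b, c, a; split; rewrite // -overlap_rotate.
by move=> a' b' c' na' nb' nc'; rewrite -[overlap _ _ _ _]overlap_rotate; apply: bound.
Qed.

Lemma ghz_maximally_mixed1 : maximally_mixed (rho1 (ghz C)).
Proof.
have real_amp : ((sqrtC (2%:R : C))^-1)^* = (sqrtC 2%:R)^-1.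
  by rewrite geC0_conj // invr_ge0 sqrtC_ge0 ler0n.
have sq_amp : (sqrtC (2%:R : C))^-1 * (sqrtC 2%:R)^-1 = 2%:R^-1.
  by rewrite -expr2 exprVn sqrtCK.
apply/matrixP => i i'; rewrite !mxE !sum_ord2.
by case: (ord2_cases i) => ->; case: (ord2_cases i') => ->;
  rewrite /ghz /= ?conjC0 ?real_amp ?mulr0 ?mul0r ?add0r ?addr0 ?mulr1 ?sq_amp.
Qed.

End ThreeQubits.

Theorem mainTheorem5 :
  (forall (C : numClosedFieldType) (psi : qubit3 C),
     normalized3 psi ->
     (maximally_mixed (rho1 psi) \/ maximally_mixed (rho2 psi) \/
      maximally_mixed (rho3 psi)) ->
     exists g : C, is_G psi g /\ g ^+ 2 = (2%:R)^-1) /\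
  (forall C : numClosedFieldType,
     exists g : C, is_G (ghz C) g /\ g ^+ 2 = (2%:R)^-1).
Proof.
split=> [C psi _ mixed | C]; exists (sqrtC 2%:R^-1); (split; last exact: sqrtCK).
- case: mixed => [mixed1 | [mixed2 | mixed3]].
  + exact: is_G_maximally_mixed1.
  + by apply/is_G_swap12/is_G_maximally_mixed1; rewrite rho1_swap12.
  + by apply/is_G_rotate/is_G_maximally_mixed1; rewrite rho1_rotate.
- exact: is_G_maximally_mixed1 (ghz_maximally_mixed1 C).
Qed.
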